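(* Let $S=(\Lambda,L)$ on $X$ and $S'=(\Lambda',L')$ on $X'$ be bispectrally dual completely integrable quantum systems, with anti-isomorphism $b:B\to B'$. Let $f\in\mathcal{O}(\Lambda)$ and $g\in\mathcal{O}(\Lambda')$ (the latter viewed, via $\pi'$, as a multiplication operator in $\mathcal{D}(X)$), and let $m=\operatorname{ord}L_f$ and $n=\operatorname{ord}L'_g$. Then there exist elements $K,Q,R\in B$ satisfying $$g^{m+1}\circ L_f=K\circ g,\qquad L_f\circ g^{m+1}=g\circ R,\qquad L_f^{n+1}\circ g=Q\circ L_f.$$
   Context: All varieties are over an algebraically closed field $\mathbb{F}$ of characteristic zero; $\mathcal{D}(X)$ denotes the ring of differential operators on $X$ and $\mathcal{O}(X)$ its coordinate ring. A quantum Hamiltonian system (QHS) on a smooth irreducible affine variety $X$ is a pair $S=(\Lambda,L)$ where $\Lambda$ is an affine variety over $\mathbb{F}$ and $L:\mathcal{O}(\Lambda)\to\mathcal{D}(X)$, $h\mapsto L_h$, is an embedding of rings; it is a completely integrable quantum system if $\dim\Lambda=\dim X$. For QHSs $S=(\Lambda,L)$ on $X$ and $S'=(\Lambda',L')$ on $X'$, suppose $X'$ covers $\Lambda$ and $X$ covers $\Lambda'$, giving natural embeddings $\pi:\mathcal{O}(\Lambda)\to\mathcal{O}(X')$ and $\pi':\mathcal{O}(\Lambda')\to\mathcal{O}(X)$; functions act as multiplication operators, so $\mathcal{O}(X)\subset\mathcal{D}(X)$, and one writes $g$ for $\pi'(g)$ and $f$ for $\pi(f)$. Let $B\subset\mathcal{D}(X)$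 be the subring generated by the images of $L$ and $\pi'$, and $B'\subset\mathcal{D}(X')$ the subring generated by the images of $L'$ and $\pi$. $S$ and $S'$ are bispectrally dual if there is a map $b:B\to B'$ with $b(L_h)=\pi(h)$ for all $h\in\mathcal{O}(\Lambda)$, $b(\pi'(k))=L'_k$ for all $k\in\mathcal{O}(\Lambda')$, $b(P_1P_2)=b(P_2)b(P_1)$ and $b(P_1+P_2)=b(P_1)+b(P_2)$ for all $P_1,P_2\in B$, and $b(P)=0$ iff $P=0$. *)

(* Affine varieties are modelled by their coordinate rings
   (commutative F-algebras), differential operators by Grothendieck's
   definition inside the F-linear endomorphisms A -> A. *)
From HB Require Import structures.
From mathcomp Require Import all_boot all_order all_algebra.
Set Implicit Arguments. Unset Strict Implicit. Unset Printing Implicit Defensive.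
Import GRing.Theory.
Local Open Scope ring_scope.

Section Varieties.
Variable F : fieldType.

Inductive in_gen_alg (C : comAlgType F) (s : seq C) : C -> Prop :=
  | gen_elt x : x \in s -> in_gen_alg s x
  | gen_scal (k : F) : in_gen_alg s (k%:A)
  | gen_add x y : in_gen_alg s x -> in_gen_alg s y -> in_gen_alg s (x + y)
  | gen_mul x y : in_gen_alg s x -> in_gen_alg s y -> in_gen_alg s (x * y).

Definition fin_gen_alg (C : comAlgType F) : Prop :=
  exists s : seq C, forall x : C, in_gen_alg s x.

Definition reduced_ring (C : comAlgType F) : Prop :=
  forall (x : C) (n : nat), x ^+ n = 0 -> x = 0.

Definition domain_ring (C : comAlgType F) : Prop :=
  forall x y : C, x * y = 0 -> x = 0 \/ y = 0.

Definition prime_ideal (C : comAlgType F) (P : C -> Prop) : Prop :=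
  [/\ P 0, (forall x y, P x -> P y -> P (x + y)),
      (forall a x, P x -> P (a * x)), ~ P 1 &
      (forall x y, P (x * y) -> P x \/ P y)].

Definition prime_chain (C : comAlgType F) (d : nat) (P : nat -> C -> Prop) :=
  (forall i, i <= d -> prime_ideal (P i))%N /\
  (forall i, i < d -> (forall x, P i x -> P i.+1 x) /\
                      exists x, P i.+1 x /\ ~ P i x)%N.

Definition krull_dim (C : comAlgType F) (d : nat) : Prop :=
  (exists P, @prime_chain C d P) /\ ~ (exists P, @prime_chain C d.+1 P).

Definition affine_coord_ring (C : comAlgType F) : Prop :=
  fin_gen_alg C /\ reduced_ring C.

(* F-points of Spec A (= points of the variety, F algebraically closed) *)
Definition is_point (A : comAlgType F) (chi : A -> F) : Prop :=
  [/\ forall x y, chi (x + y) = chi x + chi y,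
      forall x y, chi (x * y) = chi x * chi y,
      chi 1 = 1 &
      forall (k : F) x, chi (k *: x) = k * chi x].

Definition tangent_vec (A : comAlgType F) (chi : A -> F) (v : A -> F) : Prop :=
  [/\ forall x y, v (x + y) = v x + v y,
      forall (k : F) x, v (k *: x) = k * v x &
      forall x y, v (x * y) = chi x * v y + chi y * v x].

Definition tangent_dim (A : comAlgType F) (chi : A -> F) (d : nat) : Prop :=
  exists e : 'I_d -> (A -> F),
    [/\ forall i, tangent_vec chi (e i),
        (forall c : 'I_d -> F,
           (forall x, \sum_i c i * e i x = 0) -> forall i, c i = 0) &
        (forall v, tangent_vec chi v ->
           exists c : 'I_d -> F, forall x, v x = \sum_i c i * e i x)].

Definition smooth_irred_affine (A : comAlgType F) : Prop :=
  [/\ fin_gen_alg A, domain_ring A &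
      exists d, krull_dim A d /\
                forall chi : A -> F, is_point chi -> tangent_dim chi d].

Definition mulop (A : comAlgType F) (a : A) : A -> A := fun x => a * x.

Definition F_linear (A : comAlgType F) (P : A -> A) : Prop :=
  forall (k : F) x y, P (k *: x + y) = k *: P x + P y.

Fixpoint diffop_le (A : comAlgType F) (k : nat) (P : A -> A) : Prop :=
  F_linear P /\
  match k with
  | 0 => forall a x, P (a * x) = a * P x
  | k'.+1 => forall a : A, diffop_le k' (fun x => P (a * x) - a * P x)
  end.

Definition is_diffop (A : comAlgType F) (P : A -> A) : Prop :=
  exists k, diffop_le k P.

Definition diffop_ord (A : comAlgType F) (P : A -> A) (m : nat) : Prop :=
  diffop_le m P /\ forall k, diffop_le k P -> (m <= k)%N.

Definition opow (A : comAlgType F) (P : A -> A) (n : nat) : A -> A :=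
  iter n (fun Q => P \o Q) id.

(* S = (Lambda, L) on X: C = O(Lambda), A = O(X),
   L : O(Lambda) -> D(X) an embedding of rings *)
Definition QHS (A C : comAlgType F) (L : C -> (A -> A)) : Prop :=
  smooth_irred_affine A /\ affine_coord_ring C /\
  (forall h, is_diffop (L h)) /\
  (forall h1 h2, L (h1 + h2) = (fun x => L h1 x + L h2 x)) /\
  (forall h1 h2, L (h1 * h2) = L h1 \o L h2) /\
  L 1 = id /\
  injective L.

Definition CIQS (A C : comAlgType F) (L : C -> (A -> A)) : Prop :=
  QHS L /\ exists d, krull_dim A d /\ krull_dim C d.

(* embedding O(Lambda) -> O(X') coming from a covering X' -> Lambda *)
Definition alg_embedding (C A : comAlgType F) (p : C -> A) : Prop :=
  (forall x y, p (x + y) = p x + p y) /\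
  (forall x y, p (x * y) = p x * p y) /\
  p 1 = 1 /\
  (forall (k : F) x, p (k *: x) = k *: p x) /\
  injective p.

Inductive inB (A C C' : comAlgType F) (L : C -> (A -> A)) (pi' : C' -> A)
  : (A -> A) -> Prop :=
  | inB_L h : inB L pi' (L h)
  | inB_pi k : inB L pi' (mulop (pi' k))
  | inB_add P Q : inB L pi' P -> inB L pi' Q -> inB L pi' (fun x => P x + Q x)
  | inB_opp P : inB L pi' P -> inB L pi' (fun x => - P x)
  | inB_mul P Q : inB L pi' P -> inB L pi' Q -> inB L pi' (P \o Q).

Definition bispectral_dual (A C A' C' : comAlgType F)
  (L : C -> (A -> A)) (L' : C' -> (A' -> A'))
  (pi : C -> A') (pi' : C' -> A) (b : (A -> A) -> (A' -> A')) : Prop :=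
  [/\ forall h, b (L h) = mulop (pi h),
      forall k, b (mulop (pi' k)) = L' k,
      forall P1 P2, inB L pi' P1 -> inB L pi' P2 -> b (P1 \o P2) = b P2 \o b P1,
      forall P1 P2, inB L pi' P1 -> inB L pi' P2 ->
        b (fun x => P1 x + P2 x) = (fun x => b P1 x + b P2 x) &
      forall P, inB L pi' P -> (b P = (fun _ => 0) <-> P = (fun _ => 0))].

End Varieties.

(* For an operator P of order at most k, the commutator [P, a] with a function a
   has order at most k - 1; peeling commutators off one at a time moves the
   power a^(k+1) past P at the cost of a single factor a, which gives the first
   two identities.  For the third, the anti-isomorphism b sends the iterated
   commutator ad_(L_f)^j (g) to the iterated commutator of L'_g with the
   function f, up to the order of the factors.  The latter vanishes for
   j = n + 1 since ord L'_g = n, so ad_(L_f)^(n+1) (g) = 0 by injectivity of b,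
   and L_f^(n+1) can then be moved past g at the cost of a single factor L_f. *)
From HB Require Import structures.
From mathcomp Require Import all_boot all_order all_algebra.
From Stdlib Require Import FunctionalExtensionality.
Set Implicit Arguments. Unset Strict Implicit. Unset Printing Implicit Defensive.
Import GRing.Theory.
Local Open Scope ring_scope.

Definition ad (V : zmodType) (P Q : V -> V) : V -> V :=
  fun x => P (Q x) - Q (P x).

Section Operators.
Variables (F : fieldType) (A : comAlgType F).
Implicit Types (P Lf : A -> A) (a c : A).

Lemma mulopM a c : mulop (a * c) = mulop a \o mulop c.
Proof. by apply: functional_extensionality => x; rewrite /mulop /= mulrA. Qed.

Lemma diffop_le_additive k P : diffop_le k P -> {morph P : x y / x + y}.
Proof. by case: k => [|k] [linP _] x y; have := linP 1 x y; rewrite !scale1r. Qed.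

Lemma ad_mulop_nilpotent k c P :
  diffop_le k P -> iter k.+1 (fun Z => ad Z (mulop c)) P = (fun _ => 0).
Proof.
elim: k P => [|k IHk] P [_ commP].
  by apply: functional_extensionality => x; rewrite /= /ad /mulop commP subrr.
by rewrite iterSr; apply: IHk; apply: commP.
Qed.

Lemma opowSr Lf n : opow Lf n.+1 = opow Lf n \o Lf.
Proof.
apply: functional_extensionality => x.
elim: n => [|n IHn] //.
by change (Lf (opow Lf n.+1 x) = Lf (opow Lf n (Lf x))); rewrite IHn.
Qed.

Lemma opow_additive Lf : {morph Lf : x y / x + y} ->
  forall n, {morph opow Lf n : x y / x + y}.
Proof. by move=> addLf; elim=> [|n IHn] x y //=; rewrite /opow /= -/(opow Lf n) IHn. Qed.

End Operators.

Section ClosedUnderRingOps.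
Variables (F : fieldType) (A : comAlgType F) (B : (A -> A) -> Prop).
Implicit Types (P Q Lf : A -> A) (a : A).
Hypothesis B_add : forall {P Q}, B P -> B Q -> B (fun x => P x + Q x).
Hypothesis B_opp : forall {P}, B P -> B (fun x => - P x).
Hypothesis B_comp : forall {P Q}, B P -> B Q -> B (P \o Q).

Lemma B_ad P Q : B P -> B Q -> B (ad P Q).
Proof. by move=> BP BQ; apply: B_add; [apply: B_comp | apply/B_opp/B_comp]. Qed.

Lemma B_mulopX a k : B (mulop a) -> B (mulop (a ^+ k.+1)).
Proof. by move=> Ba; elim: k => [|k IHk]; rewrite ?expr1 // exprS mulopM; apply: B_comp. Qed.

Lemma B_opow Lf n : B Lf -> B (opow Lf n.+1).
Proof. by move=> BLf; elim: n => [|n IHn]; [exact: BLf | exact: (B_comp BLf IHn)]. Qed.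

Lemma mulopX_comp_diffop a k P : B (mulop a) -> B P -> diffop_le k P ->
  exists2 K, B K & mulop (a ^+ k.+1) \o P = K \o mulop a.
Proof.
move=> Ba; elim: k P => [|k IHk] P BP [_ commP].
  by exists P => //; apply: functional_extensionality => x; rewrite /mulop /= commP.
have [K BK defK] := IHk _ (B_ad BP Ba) (commP a).
exists (fun x => (mulop (a ^+ k.+1) \o P) x - K x).
  by apply: B_add; [apply: B_comp; first apply: B_mulopX | apply: B_opp].
apply: functional_extensionality => x; have := equal_f defK x.
rewrite /mulop /ad /= => <-.
by rewrite exprSr -mulrA mulrBr opprB addrC [_ * (a * _)]mulrA subrK.
Qed.

Lemma diffop_comp_mulopX a k P : B (mulop a) -> B P -> diffop_le k P ->
  exists2 R, B R & P \o mulop (a ^+ k.+1) = mulop a \o R.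
Proof.
move=> Ba; elim: k P => [|k IHk] P BP [_ commP].
  by exists P => //; apply: functional_extensionality => x; rewrite /mulop /= commP.
have [R BR defR] := IHk _ (B_ad BP Ba) (commP a).
exists (fun x => (P \o mulop (a ^+ k.+1)) x + R x).
  by apply: B_add => //; apply: B_comp => //; apply: B_mulopX.
apply: functional_extensionality => x; have := equal_f defR x.
rewrite /mulop /ad /= => defRx.
by rewrite mulrDr -defRx exprS -mulrA addrC subrK.
Qed.

Lemma opow_comp_of_ad_nilpotent Lf j P : B Lf -> {morph Lf : x y / x + y} -> B P ->
  iter j.+1 (ad Lf) P = (fun _ => 0) ->
  exists2 Q, B Q & opow Lf j.+1 \o P = Q \o Lf.
Proof.
move=> BLf addLf; elim: j P => [|j IHj] P BP adP0.
  exists P => //; apply: functional_extensionality => x.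
  by apply/eqP; rewrite -subr_eq0; apply/eqP; apply: (equal_f adP0 x).
have [Q BQ defQ] := IHj _ (B_ad BLf BP) (etrans (esym (iterSr _ _ _)) adP0).
exists (fun x => Q x + (opow Lf j.+1 \o P) x).
  by apply: B_add => //; apply: B_comp => //; apply: B_opow.
rewrite opowSr; apply: functional_extensionality => x; rewrite /comp.
have -> : Lf (P x) = ad Lf P x + P (Lf x) by rewrite /ad subrK.
by rewrite (opow_additive addLf); move: (equal_f defQ x); rewrite /comp => ->.
Qed.

Section AntiHomomorphism.
Variables (A' : comAlgType F) (b : (A -> A) -> (A' -> A')).
Hypothesis b_comp : forall {P Q}, B P -> B Q -> b (P \o Q) = b Q \o b P.
Hypothesis b_add : forall {P Q}, B P -> B Q ->
  b (fun x => P x + Q x) = (fun x => b P x + b Q x).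
Hypothesis b_eq0 : forall {P}, B P -> b P = (fun _ => 0) <-> P = (fun _ => 0).

Lemma b_opp P : B P -> b (fun x => - P x) = (fun x => - b P x).
Proof.
move=> BP; have BPN := B_add BP (B_opp BP).
have /(proj2 (b_eq0 BPN)) : (fun x => P x - P x) = (fun _ => 0).
  by apply: functional_extensionality => x; rewrite subrr.
rewrite (b_add BP (B_opp BP)) => bPN0; apply: functional_extensionality => x.
by apply/eqP; rewrite -addr_eq0 addrC; apply/eqP; apply: (equal_f bPN0 x).
Qed.

Lemma b_ad P Q : B P -> B Q -> b (ad P Q) = ad (b Q) (b P).
Proof.
move=> BP BQ; have BPQ := B_comp BP BQ; have BQP := B_comp BQ BP.
transitivity (b (fun x => (P \o Q) x + (fun y => - (Q \o P) y) x)) => //.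
by rewrite (b_add BPQ (B_opp BQP)) (b_opp BQP) (b_comp BP BQ) (b_comp BQ BP).
Qed.

Lemma b_ad_iter Lf P j : B Lf -> B P ->
  B (iter j (ad Lf) P) /\
  b (iter j (ad Lf) P) = iter j (fun Z => ad Z (b Lf)) (b P).
Proof.
move=> BLf BP; elim: j => [|j [BPj bPj]] //=.
by rewrite b_ad // bPj; split; first exact: B_ad.
Qed.

Lemma ad_nilpotent_of_dual_order Lf P c k : B Lf -> B P ->
  b Lf = mulop c -> diffop_le k (b P) -> iter k.+1 (ad Lf) P = (fun _ => 0).
Proof.
move=> BLf BP bLf ordbP; have [BPk bPk] := b_ad_iter k.+1 BLf BP.
by apply/(b_eq0 BPk); rewrite bPk bLf; apply: ad_mulop_nilpotent.
Qed.

End AntiHomomorphism.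
End ClosedUnderRingOps.

Theorem mainTheorem2
  (F : closedFieldType) (charF0 : [pchar F] =i pred0)
  (A C A' C' : comAlgType F)
  (L : C -> (A -> A)) (L' : C' -> (A' -> A'))
  (pi : C -> A') (pi' : C' -> A) (b : (A -> A) -> (A' -> A'))
  (hS : CIQS L) (hS' : CIQS L')
  (hpi : alg_embedding pi) (hpi' : alg_embedding pi')
  (hb : bispectral_dual L L' pi pi' b)
  (f : C) (g : C') (m n : nat)
  (hm : diffop_ord (L f) m) (hn : diffop_ord (L' g) n) :
  exists K Q R : A -> A,
    [/\ inB L pi' K, inB L pi' Q & inB L pi' R] /\
    [/\ mulop (pi' g ^+ m.+1) \o L f = K \o mulop (pi' g),
      L f \o mulop (pi' g ^+ m.+1) = mulop (pi' g) \o R &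
      opow (L f) n.+1 \o mulop (pi' g) = Q \o L f].
Proof.
have B_add := @inB_add F A C C' L pi'; have B_opp := @inB_opp F A C C' L pi'.
have B_comp := @inB_mul F A C C' L pi'.
have Bg : inB L pi' (mulop (pi' g)) by constructor.
have BLf : inB L pi' (L f) by constructor.
case: hm hn hb => ordLf _ [ordL'g _] [bL bpi' b_comp b_add b_eq0].
have [K BK defK] := mulopX_comp_diffop B_add B_opp B_comp Bg BLf ordLf.
have [R BR defR] := diffop_comp_mulopX B_add B_opp B_comp Bg BLf ordLf.
have adg0 : iter n.+1 (ad (L f)) (mulop (pi' g)) = (fun _ => 0).
  by apply: (ad_nilpotent_of_dual_order B_add B_opp B_comp b_comp b_add b_eq0 BLf Bg (bL f));
    rewrite bpi'.
have [Q BQ defQ] := opow_comp_of_ad_nilpotent B_add B_opp B_comp BLf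
  (diffop_le_additive ordLf) Bg adg0.
by exists K, Q, R.
Qed.
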